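(* Assume the payoffs are normalized with $T=1$, $S=0$. Let $\mathbf p=(p_1,p_2,p_3,p_4)$ be a firm memory-one strategy for X. Then $\mathbf p$ is strictly firm if and only if $$p_3<\frac{P}{R-P}(1-p_1)\qquad\text{and}\qquad p_3<\frac{P}{1-P}(1-p_2).$$ Moreover, if the X Press-Dyson vector of $\mathbf p$ is $\mathbf p-(1,1,0,0)=\alpha\mathbf S_X+\beta\mathbf S_Y+\gamma\mathbf 1+\delta\mathbf e_{23}$, then $\mathbf p$ is strictly firm if and only if $-\delta>\max(\alpha,(1-2P)\alpha)$.
   Context: Iterated Prisoner's Dilemma with normalized payoffs $T=1>R>P>S=0$, $2R>1$; outcomes ordered $cc,cd,dc,dd$ (first letter X's play, second Y's; $c$ = cooperate, $d$ = defect); payoff vectors $\mathbf S_X=(R,0,1,P)$, $\mathbf S_Y=(R,1,0,P)$, $\mathbf 1=(1,1,1,1)$, $\mathbf e_{23}=(0,1,1,0)$. A memory-one strategy for X is $\mathbf p\in[0,1]^4$, $p_i$ the probability X plays $c$ after the $i$-th outcome; it is firm if $p_4=0$. A strategy pattern for Y is any (possibly randomized, history-dependent) rule for Y's play. With $\mathbf v^n$ the distribution of the outcome of round $n$, a limit distribution is any limit point $\mathbf v=(v_1,\dots,v_4)$ of the Cesàro averages $\frac1n\sum_{k\le n}\mathbf v^k$, with $s_X=\langle\mathbf v\cdot\mathbf S_X\rangle$, $s_Y=\langle\mathbf v\cdot\mathbf S_Y\rangle$. $\mathbf p$ is strictly firm if it is firm and, for every strategy pattern of Y and every associated limit distribution,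 $s_Y\ge P$ implies $v_4=1$ (and so $s_Y=s_X=P$). *)

From HB Require Import structures.
From mathcomp Require Import all_boot all_order all_algebra.
From mathcomp Require Import reals.
Set Implicit Arguments. Unset Strict Implicit. Unset Printing Implicit Defensive.
Import Order.TTheory GRing.Theory Num.Theory.
Local Open Scope ring_scope.

(* Outcomes of a round, ordered cc, cd, dc, dd (X's play first). *)
Definition outcome := 'I_4.
Definition o_cc : outcome := @Ordinal 4 0 erefl.
Definition o_cd : outcome := @Ordinal 4 1 erefl.
Definition o_dc : outcome := @Ordinal 4 2 erefl.
Definition o_dd : outcome := @Ordinal 4 3 erefl.

Definition xcoop (o : outcome) : bool := (val o < 2)%N.
Definition ycoop (o : outcome) : bool := (val o == 0)%N || (val o == 2)%N.

Section IPD.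
Variable F : realType.

Definition vec4 (a b c d : F) : outcome -> F :=
  fun o => match val o with 0 => a | 1 => b | 2 => c | _ => d end%N.

(* normalized payoffs T = 1, S = 0 *)
Definition S_X (Rp Pp : F) := vec4 Rp 0 1 Pp.
Definition S_Y (Rp Pp : F) := vec4 Rp 1 0 Pp.
Definition one4 := vec4 1 1 1 1.
Definition e23 := vec4 0 1 1 0.

Definition prob_of (b : bool) (x : F) := if b then x else 1 - x.

(* A memory-one strategy p for X with initial cooperation probability x0,
   and a strategy pattern q for Y : q h = probability that Y cooperates
   after the history h (sequence of past outcomes, oldest first). *)
Definition xprob (p : outcome -> F) (x0 : F) (h : seq outcome) : F :=
  if h is [::] then x0 else p (last o_cc h).

Definition trans (p : outcome -> F) (x0 : F) (q : seq outcome -> F)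
    (h : seq outcome) (o : outcome) : F :=
  prob_of (xcoop o) (xprob p x0 h) * prob_of (ycoop o) (q h).

Definition hprob p x0 q (h : seq outcome) : F :=
  \prod_(i < size h) trans p x0 q (take i h) (nth o_cc h i).

(* vdist p x0 q n = v^{n+1}, distribution of the outcome of round n+1 *)
Definition vdist p x0 q (n : nat) (o : outcome) : F :=
  \sum_(h : n.-tuple outcome) hprob p x0 q h * trans p x0 q h o.

Definition cesaro p x0 q (n : nat) (o : outcome) : F :=
  (n.+1%:R)^-1 * \sum_(k < n.+1) vdist p x0 q k o.

Definition limit_dist p x0 q (v : outcome -> F) : Prop :=
  forall eps : F, 0 < eps -> forall N : nat, exists2 n : nat, (N <= n)%N &
    forall o : outcome, `|cesaro p x0 q n o - v o| < eps.

Definition dotv (v w : outcome -> F) : F := \sum_(o : outcome) v o * w o.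

Definition memory_one (p : outcome -> F) : Prop :=
  forall o, 0 <= p o <= 1.

Definition strategy_pattern (q : seq outcome -> F) : Prop :=
  forall h, 0 <= q h <= 1.

Definition firm (p : outcome -> F) : Prop := p o_dd = 0.

Definition strictly_firm (Rp Pp : F) (p : outcome -> F) : Prop :=
  firm p /\
  forall (x0 : F) (q : seq outcome -> F) (v : outcome -> F),
    0 <= x0 <= 1 -> strategy_pattern q -> limit_dist p x0 q v ->
    Pp <= dotv v (S_Y Rp Pp) -> v o_dd = 1.

End IPD.

(** The key fact is Akin's identity: the probability that X cooperates in
    round [k + 2] is the expectation of [p] under the outcome law of round
    [k + 1], so the partial sums of the outcome laws, weighted by the
    Press-Dyson vector [p - (1,1,0,0)], telescope and stay bounded.  Hence every
    limit distribution [v] satisfies [<v, p - (1,1,0,0)> = 0] besides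
    [<v, 1> = 1]; when [p_4 = 0] these two identities and [s_Y >= P] leave
    [v = e_dd] as the only option exactly under the two strict inequalities.
    If the first inequality fails, Y always cooperating produces a limit
    distribution proportional to [(p_3, 0, 1 - p_1, 0)] with [s_Y >= P]; if the
    second fails, Y cooperating only after mutual defection produces one
    proportional to [(0, p_3, 1 - p_2, 1 - p_2)].  The Press-Dyson form follows
    by solving for [p_1, p_2, p_3] in terms of [alpha, beta, delta]. *)

From HB Require Import structures.
From mathcomp Require Import all_boot all_order all_algebra.
From mathcomp Require Import reals ring lra.
Import Order.TTheory GRing.Theory Num.Theory.
Local Open Scope ring_scope.
Set Implicit Arguments. Unset Strict Implicit. Unset Printing Implicit Defensive.

Lemma outcomeP (o : outcome) : [\/ o = o_cc, o = o_cd, o = o_dc | o = o_dd].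
Proof.
case: o => [[|[|[|[|n]]]] Hn] //;
  [constructor 1 | constructor 2 | constructor 3 | constructor 4]; exact: val_inj.
Qed.

Lemma big_tuple_rcons (V : nmodType) (T : finType) k (G : k.+1.-tuple T -> V) :
  \sum_(t : k.+1.-tuple T) G t =
  \sum_(t : k.-tuple T) \sum_(x : T) G [tuple of rcons t x].
Proof.
rewrite pair_big /=.
pose split_last (t : k.+1.-tuple T) :=
  ([tuple of belast (thead t) (behead t)], last (thead t) (behead t)).
rewrite (reindex (fun tx : k.-tuple T * T => [tuple of rcons tx.1 tx.2])) //.
exists split_last => [[t x] _ | t _].
  rewrite /split_last; set u := [tuple of rcons t x].
  have : val u = rcons t x by [].
  case: (tupleP u) => y s /= E.
  rewrite lastI in E; move/rcons_inj: E => [E1 E2].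
  by congr (_, _) => //; apply: val_inj.
by apply: val_inj; case: (tupleP t) => x s /=; rewrite -lastI.
Qed.

Section Play.
Variable F : realType.

Lemma big_outcome (f : outcome -> F) :
  \sum_(o : outcome) f o = f o_cc + f o_cd + f o_dc + f o_dd.
Proof.
rewrite !big_ord_recl big_ord0 addr0 !addrA.
by congr (_ + _ + _ + _); congr f; apply: val_inj.
Qed.

Lemma one4E o : one4 F o = 1.
Proof. by case: (outcomeP o) => ->. Qed.

Lemma prob_of01 b (x : F) : 0 <= x <= 1 -> 0 <= prob_of b x <= 1.
Proof. by case: b => /andP[x0 x1] /=; apply/andP; split; lra. Qed.

Lemma ltr_nat_bound (x : F) n : 0 <= x -> (Num.bound x <= n)%N -> x < n.+1%:R.
Proof.
move=> x_ge0 bound_n; apply: lt_le_trans (archi_boundP x_ge0) _.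
by rewrite ler_nat (leq_trans bound_n).
Qed.

Lemma dotv_dist_le (v c w : outcome -> F) eps :
  (forall o, `|v o - c o| <= eps) -> `|dotv v w - dotv c w| <= eps * \sum_o `|w o|.
Proof.
move=> vc; rewrite /dotv -sumrB mulr_sumr; apply: le_trans (ler_norm_sum _ _ _) _.
by apply: ler_sum => o _; rewrite -mulrBl normrM ler_wpM2r.
Qed.

Definition press_dyson (p : outcome -> F) (o : outcome) : F := p o - vec4 1 1 0 0 o.

Definition coop_prob p x0 q k : F := vdist p x0 q k o_cc + vdist p x0 q k o_cd.

Definition cumdist p x0 q n o : F := \sum_(k < n.+1) vdist p x0 q k o.

Section Process.
Variables (p : outcome -> F) (x0 : F) (q : seq outcome -> F).

Lemma hprob_rcons h o :
  hprob p x0 q (rcons h o) = hprob p x0 q h * trans p x0 q h o.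
Proof.
rewrite /hprob size_rcons big_ord_recr /=; congr (_ * _).
  apply: eq_bigr => i _.
  by rewrite -cats1 takel_cat ?nth_cat ?ltn_ord // ltnW.
by rewrite -cats1 take_cat ltnn subnn take0 cats0 nth_cat ltnn subnn.
Qed.

Lemma sum_hprob_rcons k (G : seq outcome -> F) :
  \sum_(t : k.+1.-tuple outcome) hprob p x0 q t * G t =
  \sum_(t : k.-tuple outcome) hprob p x0 q t *
     \sum_(o : outcome) trans p x0 q t o * G (rcons t o).
Proof.
rewrite big_tuple_rcons; apply: eq_bigr => t _.
by rewrite mulr_sumr; apply: eq_bigr => o _; rewrite hprob_rcons mulrA.
Qed.

Lemma sum_hprob_last k (G : outcome -> F) :
  \sum_(t : k.+1.-tuple outcome) hprob p x0 q t * G (last o_cc t) =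
  \sum_(o : outcome) vdist p x0 q k o * G o.
Proof.
rewrite (sum_hprob_rcons k (fun h => G (last o_cc h))) /vdist.
under eq_bigr => t _ do rewrite mulr_sumr.
rewrite exchange_big /=; apply: eq_bigr => o _.
by rewrite mulr_suml; apply: eq_bigr => t _; rewrite last_rcons mulrA.
Qed.

Lemma sum_trans h : \sum_(o : outcome) trans p x0 q h o = 1.
Proof. by rewrite big_outcome /trans /=; ring. Qed.

Lemma sum_hprob k : \sum_(t : k.-tuple outcome) hprob p x0 q t = 1.
Proof.
elim: k => [|k IH].
  rewrite (eq_bigr (fun _ => hprob p x0 q [::])) => [|t _]; last by rewrite tuple0.
  by rewrite sumr_const card_tuple expn0 /hprob big_ord0.
have := sum_hprob_rcons k (fun _ => 1); under eq_bigr => t _ do rewrite mulr1.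
move=> ->; rewrite -{2}IH; apply: eq_bigr => t _.
by under eq_bigr => o _ do rewrite mulr1; rewrite sum_trans mulr1.
Qed.

Lemma sum_vdist k : \sum_(o : outcome) vdist p x0 q k o = 1.
Proof.
have := sum_hprob_last k (fun=> 1).
under eq_bigr => t _ do rewrite mulr1; under [in RHS]eq_bigr => o _ do rewrite mulr1.
by move=> <-; rewrite sum_hprob.
Qed.

Lemma xprob_last k (t : k.+1.-tuple outcome) : xprob p x0 t = p (last o_cc t).
Proof. by case: (tupleP t) => y s /=; case: (s : seq _). Qed.

Lemma vdist0 o : vdist p x0 q 0 o = trans p x0 q [::] o.
Proof.
rewrite /vdist (eq_bigr (fun=> hprob p x0 q [::] * trans p x0 q [::] o)).
  by rewrite sumr_const card_tuple expn0 /hprob big_ord0 mul1r.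
by move=> t _; rewrite tuple0.
Qed.

Lemma coop_probS k :
  coop_prob p x0 q k.+1 = \sum_(o : outcome) vdist p x0 q k o * p o.
Proof.
rewrite -sum_hprob_last /coop_prob /vdist -big_split /=; apply: eq_bigr => t _.
by rewrite -mulrDr /trans /= xprob_last; congr (_ * _); ring.
Qed.

Lemma cumdist0 o : cumdist p x0 q 0 o = vdist p x0 q 0 o.
Proof. by rewrite /cumdist big_ord1. Qed.

Lemma cumdistS n o : cumdist p x0 q n.+1 o = cumdist p x0 q n o + vdist p x0 q n.+1 o.
Proof. by rewrite /cumdist big_ord_recr. Qed.

Lemma sum_cumdist n : \sum_(o : outcome) cumdist p x0 q n o = n.+1%:R.
Proof.
rewrite exchange_big /= (eq_bigr (fun=> 1)) => [|k _]; last exact: sum_vdist.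
by rewrite sumr_const card_ord.
Qed.

Lemma cumdist_akin n :
  \sum_(o : outcome) cumdist p x0 q n o * press_dyson p o =
  coop_prob p x0 q n.+1 - coop_prob p x0 q 0.
Proof.
elim: n => [|n IH].
  rewrite coop_probS /coop_prob !big_outcome /press_dyson /vec4 /=.
  by rewrite !cumdist0; ring.
rewrite (coop_probS n.+1); move: IH; rewrite !big_outcome.
by rewrite /press_dyson /vec4 /= !cumdistS /coop_prob => IH; lra.
Qed.

Lemma cesaroE n o : cesaro p x0 q n o = cumdist p x0 q n o / n.+1%:R.
Proof. by rewrite /cesaro /cumdist mulrC. Qed.

Lemma limit_dist_of_cumdist (v : outcome -> F) K :
  (forall n o, `|cumdist p x0 q n o - n.+1%:R * v o| <= K) -> limit_dist p x0 q v.
Proof.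
move=> HK eps eps_gt0 N.
have K_ge0 : 0 <= K := le_trans (normr_ge0 _) (HK 0%N o_cc).
exists (maxn N (Num.bound (K / eps))) => [|o]; first exact: leq_maxl.
set n := maxn _ _.
have : K / eps < n.+1%:R by apply: ltr_nat_bound; [exact: divr_ge0 (ltW _) | exact: leq_maxr].
rewrite ltr_pdivrMr // => Kn.
have -> : cesaro p x0 q n o - v o = (cumdist p x0 q n o - n.+1%:R * v o) / n.+1%:R.
  by rewrite cesaroE; field; rewrite addrC natr1 pnatr_eq0.
rewrite normrM normfV normr_nat ltr_pdivrMr ?ltr0Sn //.
by apply: le_lt_trans (HK n o) _; rewrite mulrC.
Qed.

Lemma limit_dist_dotv (v w : outcome -> F) a K :
  (forall n, `|\sum_(o : outcome) cumdist p x0 q n o * w o - n.+1%:R * a| <= K) ->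
  limit_dist p x0 q v -> dotv v w = a.
Proof.
move=> HK Hv; apply/eqP; rewrite -subr_eq0 -normr_le0.
apply/ler_addgt0Pr => e e_gt0; rewrite add0r.
have K_ge0 : 0 <= K := le_trans (normr_ge0 _) (HK 0%N).
set W := \sum_o `|w o| + 1.
have W_gt0 : 0 < W by rewrite ltr_wpDl ?sumr_ge0.
have [|n Kn Hn] := Hv (e / (2 * W)) _ (Num.bound (2 * K / e)).
  by rewrite divr_gt0 ?mulr_gt0.
have := ltr_nat_bound (divr_ge0 (mulr_ge0 (ler0n _ 2) K_ge0) (ltW e_gt0)) Kn.
rewrite ltr_pdivrMr // {Kn} => Kn.
have near : `|dotv v w - dotv (cesaro p x0 q n) w| <= e / 2.
  apply: le_trans (dotv_dist_le (eps := e / (2 * W)) _ _) _.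
    by move=> o; rewrite distrC ltW.
  have -> : e / 2 = e / (2 * W) * W by field; rewrite gt_eqF.
  by rewrite ler_wpM2l ?divr_ge0 ?mulr_ge0 ?ltW // ltrDl.
have far : `|dotv (cesaro p x0 q n) w - a| <= e / 2.
  have -> : dotv (cesaro p x0 q n) w - a =
            (\sum_o cumdist p x0 q n o * w o - n.+1%:R * a) / n.+1%:R.
    rewrite /dotv; under eq_bigr => o _ do rewrite cesaroE mulrAC.
    by rewrite -mulr_suml; field; rewrite addrC natr1 pnatr_eq0.
  rewrite normrM normfV normr_nat ler_pdivrMr ?ltr0Sn //.
  by apply: le_trans (HK n) _; lra.
apply: le_trans (ler_distD (dotv (cesaro p x0 q n) w) _ _) _.
by rewrite [e]splitr lerD.
Qed.

Lemma dotv_one_limit (v : outcome -> F) : limit_dist p x0 q v -> dotv v (one4 F) = 1.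
Proof.
apply: (limit_dist_dotv (K := 0)) => n.
under eq_bigr => o _ do rewrite one4E mulr1.
by rewrite mulr1 sum_cumdist subrr normr0.
Qed.

Lemma limit_dist_scaled (c : outcome -> F) D K : 0 < D ->
  (forall n o, `|cumdist p x0 q n o * D - n.+1%:R * c o| <= K) ->
  limit_dist p x0 q (fun o => c o / D).
Proof.
move=> D_gt0 HK; apply: (limit_dist_of_cumdist (K := K / D)) => n o.
rewrite ler_pdivlMr // -[D in _ * D]gtr0_norm // -normrM.
have -> : (cumdist p x0 q n o - n.+1%:R * (c o / D)) * D =
          cumdist p x0 q n o * D - n.+1%:R * c o by field; rewrite gt_eqF.
exact: HK.
Qed.

Hypotheses (p01 : memory_one p) (x0_01 : 0 <= x0 <= 1) (q01 : strategy_pattern q).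

Lemma xprob01 h : 0 <= xprob p x0 h <= 1.
Proof. by case: h => [|o h] //=; apply: p01. Qed.

Lemma trans_ge0 h o : 0 <= trans p x0 q h o.
Proof.
have /andP[x_ge0 _] := prob_of01 (xcoop o) (xprob01 h).
by have /andP[y_ge0 _] := prob_of01 (ycoop o) (q01 h); apply: mulr_ge0.
Qed.

Lemma vdist_ge0 k o : 0 <= vdist p x0 q k o.
Proof.
apply: sumr_ge0 => t _; apply: mulr_ge0 (trans_ge0 _ _).
by apply: prodr_ge0 => i _; apply: trans_ge0.
Qed.

Lemma vdist_le1 k o : vdist p x0 q k o <= 1.
Proof.
rewrite -(sum_vdist k) (bigD1 o) //= lerDl.
by apply: sumr_ge0 => o' _; apply: vdist_ge0.
Qed.

Lemma coop_prob01 k : 0 <= coop_prob p x0 q k <= 1.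
Proof.
have := sum_vdist k; rewrite big_outcome /coop_prob.
have := vdist_ge0 k o_cc; have := vdist_ge0 k o_cd.
have := vdist_ge0 k o_dc; have := vdist_ge0 k o_dd.
by move=> *; apply/andP; split; lra.
Qed.

Lemma limit_dist_ge0 v o : limit_dist p x0 q v -> 0 <= v o.
Proof.
move=> Hv; rewrite leNgt; apply/negP => v_lt0.
have [|n _ /(_ o)] := Hv (- v o) _ 0%N; first by rewrite oppr_gt0.
have : 0 <= cesaro p x0 q n o.
  by rewrite cesaroE divr_ge0 // sumr_ge0 // => k _; apply: vdist_ge0.
by rewrite ltr_norml => ? /andP[_ ?]; lra.
Qed.

Lemma dotv_press_dyson_limit v : limit_dist p x0 q v -> dotv v (press_dyson p) = 0.
Proof.
apply: (limit_dist_dotv (K := 1)) => n; rewrite mulr0 subr0 cumdist_akin.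
have := coop_prob01 n.+1; have := coop_prob01 0.
by move=> /andP[? ?] /andP[? ?]; rewrite ler_norml; apply/andP; split; lra.
Qed.

Lemma limit_dist_point o0 :
  (forall k, vdist p x0 q k o0 = 1) -> limit_dist p x0 q (fun o => (o == o0)%:R).
Proof.
move=> v_o0; apply: (limit_dist_of_cumdist (K := 0)) => n o.
suff -> : cumdist p x0 q n o = n.+1%:R * (o == o0)%:R by rewrite subrr normr0.
rewrite /cumdist (eq_bigr (fun=> (o == o0)%:R)) ?sumr_const ?card_ord ?mulr_natl //.
move=> k _; have [-> //|ne] := eqVneq o o0.
apply/eqP; rewrite eq_le vdist_ge0 andbT -(lerD2r (vdist p x0 q k o0)) add0r.
rewrite [X in _ <= X]v_o0 -(sum_vdist k) (bigD1 o) //= (bigD1 o0) 1?eq_sym //=.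
rewrite addrA lerDl.
by apply: sumr_ge0 => o' _; apply: vdist_ge0.
Qed.
End Process.

Lemma dotv_indicator (o0 : outcome) (w : outcome -> F) :
  dotv (fun o => (o == o0)%:R) w = w o0.
Proof.
rewrite /dotv (bigD1 o0) //= eqxx mul1r big1 ?addr0 // => o /negbTE ->.
by rewrite mul0r.
Qed.

Lemma dd_of_akin (Rp Pp p1 p2 p3 v1 v2 v3 v4 : F) :
  0 < Pp -> p3 * (Rp - Pp) < Pp * (1 - p1) -> p3 * (1 - Pp) < Pp * (1 - p2) ->
  0 <= p3 -> 0 <= v1 -> 0 <= v2 -> 0 <= v3 -> v1 + v2 + v3 + v4 = 1 ->
  v1 * (p1 - 1) + v2 * (p2 - 1) + v3 * p3 = 0 ->
  Pp <= v1 * Rp + v2 + v4 * Pp -> v4 = 1.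
Proof.
move=> P_gt0 c1 c2 p3_ge0 v1_ge0 v2_ge0 v3_ge0 sum1 akin sY.
have v4E : v4 = 1 - v1 - v2 - v3 by lra.
have gain : 0 <= (Rp - Pp) * v1 + (1 - Pp) * v2 - Pp * v3 by rewrite v4E in sY; lra.
have akinP := congr1 (fun x => Pp * x) akin.
have gainp3 := mulr_ge0 p3_ge0 gain.
rewrite -subr_gt0 in c1; rewrite -subr_gt0 in c2.
have w1 := mulr_ge0 v1_ge0 (ltW c1); have w2 := mulr_ge0 v2_ge0 (ltW c2).
have : v1 * (Pp * (1 - p1) - p3 * (Rp - Pp)) = 0 /\
       v2 * (Pp * (1 - p2) - p3 * (1 - Pp)) = 0.
  by move: akinP w1 w2 gainp3 => /= *; split; lra.
move=> [/eqP]; rewrite mulf_eq0 (gt_eqF c1) orbF => /eqP v1_0.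
move=> /eqP; rewrite mulf_eq0 (gt_eqF c2) orbF => /eqP v2_0.
have : Pp * v3 <= 0 by rewrite v1_0 v2_0 in gain; lra.
rewrite pmulr_rle0 // => v3_le0; lra.
Qed.

Lemma dotv_vec4_scaled (a b c d D : F) (w : outcome -> F) :
  dotv (fun o => vec4 a b c d o / D) w =
  (a * w o_cc + b * w o_cd + c * w o_dc + d * w o_dd) / D.
Proof. by rewrite /dotv big_outcome /vec4 /=; ring. Qed.

Lemma press_dyson_coords (Rp Pp : F) (p : outcome -> F) a b g d :
  firm p ->
  (forall o, press_dyson p o =
     a * S_X Rp Pp o + b * S_Y Rp Pp o + g * one4 F o + d * e23 F o) ->
  [/\ p o_cc = 1 + (a + b) * (Rp - Pp),
      p o_cd = 1 + b - (a + b) * Pp + d &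
      p o_dc = a - (a + b) * Pp + d].
Proof.
move=> p_dd pd; have := pd o_cc; have := pd o_cd; have := pd o_dc; have := pd o_dd.
rewrite /press_dyson /S_X /S_Y /one4 /e23 /vec4 /= p_dd.
by move=> *; split; lra.
Qed.

Section StrictlyFirm.
Variables (Rp Pp : F) (p : outcome -> F).
Hypotheses (P_gt0 : 0 < Pp) (P_lt_R : Pp < Rp) (R_lt1 : Rp < 1).
Hypotheses (p01 : memory_one p) (p_dd : firm p).

Let one01 : 0 <= (1 : F) <= 1. Proof. by rewrite ler01 lexx. Qed.

Lemma strictly_firm_of_ineqs :
  p o_dc * (Rp - Pp) < Pp * (1 - p o_cc) -> p o_dc * (1 - Pp) < Pp * (1 - p o_cd) ->
  strictly_firm Rp Pp p.
Proof.
move=> c1 c2; split => // x0 q v x0_01 q01 Hv sY.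
have v_ge0 o := limit_dist_ge0 p01 x0_01 q01 o Hv.
have := dotv_one_limit Hv; have := dotv_press_dyson_limit p01 x0_01 q01 Hv.
move: sY; rewrite /dotv !big_outcome /press_dyson /S_Y /one4 /vec4 /= p_dd.
have /andP[p3_ge0 _] := p01 o_dc.
move=> sY akin sum1.
by apply: (dd_of_akin P_gt0 c1 c2 p3_ge0 (v_ge0 o_cc) (v_ge0 o_cd) (v_ge0 o_dc)); lra.
Qed.

Lemma not_strictly_firm_of_limit x0 q v :
  0 <= x0 <= 1 -> strategy_pattern q -> limit_dist p x0 q v ->
  Pp <= dotv v (S_Y Rp Pp) -> v o_dd < 1 -> ~ strictly_firm Rp Pp p.
Proof.
move=> x0_01 q01 Hv sY dd_lt1 [_ /(_ x0 q v x0_01 q01 Hv sY) dd1].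
by rewrite dd1 ltxx in dd_lt1.
Qed.

Definition allc : seq outcome -> F := fun=> 1.

Lemma allc_pattern : strategy_pattern allc.
Proof. by move=> h; rewrite /allc ler01 lexx. Qed.

Lemma allc_vdist_ydefect k o : ~~ ycoop o -> vdist p 1 allc k o = 0.
Proof.
move=> yd; rewrite /vdist big1 // => t _.
by rewrite /trans /allc (negbTE yd) /= subrr !mulr0.
Qed.

Lemma allc_cumdist_ydefect n o : ~~ ycoop o -> cumdist p 1 allc n o = 0.
Proof. by move=> yd; rewrite /cumdist big1 // => k _; apply: allc_vdist_ydefect. Qed.

Lemma allc_vdist_cc k : p o_cc = 1 -> vdist p 1 allc k o_cc = 1.
Proof.
move=> p_cc; elim: k => [|k IH]; first by rewrite vdist0 /trans /allc /= mulr1.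
have cd0 k' := allc_vdist_ydefect k' (o := o_cd) isT.
have dd0 k' := allc_vdist_ydefect k' (o := o_dd) isT.
have dc0 : vdist p 1 allc k o_dc = 0.
  by have := sum_vdist p 1 allc k; rewrite big_outcome IH !cd0 !dd0; lra.
have := coop_probS p 1 allc k; rewrite /coop_prob big_outcome IH p_cc dc0.
by rewrite !cd0 !dd0; lra.
Qed.

Lemma allc_limit_dist : p o_cc < 1 ->
  limit_dist p 1 allc
    (fun o => vec4 (p o_dc) 0 (1 - p o_cc) 0 o / (1 - p o_cc + p o_dc)).
Proof.
move=> p_cc; have /andP[p_dc_ge0 _] := p01 o_dc.
apply: (limit_dist_scaled (K := 1)) => [|n o]; first lra.
have cd0 := allc_cumdist_ydefect n (o := o_cd) isT.
have dd0 := allc_cumdist_ydefect n (o := o_dd) isT.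
have : cumdist p 1 allc n o_dc = n.+1%:R - cumdist p 1 allc n o_cc.
  by have := sum_cumdist p 1 allc n; rewrite big_outcome cd0 dd0; lra.
move=> dcE; have := cumdist_akin p 1 allc n.
rewrite big_outcome /press_dyson /vec4 /= cd0 dd0 dcE.
have /andP[? ?] := coop_prob01 p01 one01 allc_pattern n.+1.
have /andP[? ?] := coop_prob01 p01 one01 allc_pattern 0.
move=> akin; rewrite ler_norml.
by case: (outcomeP o) => ->; rewrite /vec4 /= ?cd0 ?dd0 ?dcE; apply/andP; split; lra.
Qed.

Lemma allc_not_strictly_firm :
  Pp * (1 - p o_cc) <= p o_dc * (Rp - Pp) -> ~ strictly_firm Rp Pp p.
Proof.
move=> cc_dc; have /andP[_ p_cc_le1] := p01 o_cc; have /andP[p_dc_ge0 _] := p01 o_dc.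
have [p_cc_lt1|p_cc_ge1] := ltP (p o_cc) 1.
  apply: (not_strictly_firm_of_limit one01 allc_pattern (allc_limit_dist p_cc_lt1)).
    by rewrite dotv_vec4_scaled /S_Y /vec4 /= ler_pdivlMr; lra.
  by rewrite /vec4 /= mul0r ltr01.
have p_cc : p o_cc = 1 by lra.
have Hv := limit_dist_point p01 one01 allc_pattern (allc_vdist_cc ^~ p_cc).
apply: (not_strictly_firm_of_limit one01 allc_pattern Hv).
  by rewrite dotv_indicator /S_Y /vec4 /= ltW.
by have -> : (o_dd == o_cc) = false by []; rewrite ltr01.
Qed.

(* Against a firm X this pattern never reaches [cc], and a [dd] is always
   followed by a [dc]. *)
Definition coop_after_dd : seq outcome -> F := fun h => (last o_cc h == o_dd)%:R.

Lemma coop_after_dd_pattern : strategy_pattern coop_after_dd.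
Proof. by move=> h; rewrite /coop_after_dd ler0n lern1 leq_b1. Qed.

Lemma after_dd_trans_cc h : trans p 1 coop_after_dd h o_cc = 0.
Proof.
rewrite /trans /coop_after_dd /=; case: h => [|o h] /=; first by rewrite mulr0.
by case: eqP => [->|_]; rewrite ?p_dd ?mul0r ?mulr0.
Qed.

Lemma after_dd_vdist_cc k : vdist p 1 coop_after_dd k o_cc = 0.
Proof. by rewrite /vdist big1 // => t _; rewrite after_dd_trans_cc mulr0. Qed.

Lemma after_dd_vdist_dcS k :
  vdist p 1 coop_after_dd k.+1 o_dc = vdist p 1 coop_after_dd k o_dd.
Proof.
transitivity (\sum_(o : outcome) vdist p 1 coop_after_dd k o * (o == o_dd)%:R).
  rewrite -sum_hprob_last /vdist; apply: eq_bigr => t _; congr (_ * _).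
  rewrite /trans /= xprob_last /coop_after_dd.
  by case: eqP => [->|_]; rewrite ?p_dd ?subr0 ?mulr1 ?mulr0.
rewrite (bigD1 o_dd) //= mulr1 big1 ?addr0 // => o /negbTE ->.
by rewrite mulr0.
Qed.

Lemma after_dd_cumdist_dc n :
  cumdist p 1 coop_after_dd n o_dc =
  cumdist p 1 coop_after_dd n o_dd - vdist p 1 coop_after_dd n o_dd.
Proof.
elim: n => [|n IH]; first by rewrite !cumdist0 vdist0 /trans /= subrr mul0r subrr.
by rewrite !cumdistS IH after_dd_vdist_dcS; ring.
Qed.

Lemma after_dd_vdist_cd k : p o_cd = 1 -> vdist p 1 coop_after_dd k o_cd = 1.
Proof.
move=> p_cd; elim: k => [|k IH]; first by rewrite vdist0 /trans /= subr0 mulr1.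
have := vdist_ge0 p01 one01 coop_after_dd_pattern k o_dc.
have := vdist_ge0 p01 one01 coop_after_dd_pattern k o_dd.
have := sum_vdist p 1 coop_after_dd k; rewrite big_outcome after_dd_vdist_cc IH.
move=> sum1 dd_ge0 dc_ge0; have dc0 : vdist p 1 coop_after_dd k o_dc = 0 by lra.
have := coop_probS p 1 coop_after_dd k.
by rewrite /coop_prob big_outcome !after_dd_vdist_cc IH dc0 p_cd p_dd; lra.
Qed.

Lemma after_dd_limit_dist : p o_cd < 1 ->
  limit_dist p 1 coop_after_dd
    (fun o => vec4 0 (p o_dc) (1 - p o_cd) (1 - p o_cd) o / (p o_dc + 2 * (1 - p o_cd))).
Proof.
move=> p_cd; have /andP[p_cd_ge0 p_cd_le1] := p01 o_cd.
have /andP[p_dc_ge0 p_dc_le1] := p01 o_dc.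
apply: (limit_dist_scaled (K := 5)) => [|n o]; first lra.
have q01 := coop_after_dd_pattern.
set e := vdist p 1 coop_after_dd n o_dd.
have e_ge0 : 0 <= e := vdist_ge0 p01 one01 q01 n o_dd.
have e_le1 : e <= 1 := vdist_le1 p01 one01 q01 n o_dd.
have := mulr_ile1 e_ge0 p_dc_ge0 e_le1 p_dc_le1; have := mulr_ge0 e_ge0 p_dc_ge0.
have := mulr_ile1 e_ge0 p_cd_ge0 e_le1 p_cd_le1; have := mulr_ge0 e_ge0 p_cd_ge0.
have /andP[? ?] := coop_prob01 p01 one01 q01 n.+1.
have /andP[? ?] := coop_prob01 p01 one01 q01 0.
have cc0 : cumdist p 1 coop_after_dd n o_cc = 0.
  by rewrite /cumdist big1 // => k _; apply: after_dd_vdist_cc.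
move: (after_dd_cumdist_dc n); rewrite -/e => dcE.
have ddE : cumdist p 1 coop_after_dd n o_dd = cumdist p 1 coop_after_dd n o_dc + e by lra.
have cdE : cumdist p 1 coop_after_dd n o_cd =
           n.+1%:R - 2 * cumdist p 1 coop_after_dd n o_dc - e.
  by have := sum_cumdist p 1 coop_after_dd n; rewrite big_outcome cc0 ddE; lra.
have := cumdist_akin p 1 coop_after_dd n.
rewrite big_outcome /press_dyson /vec4 /= cc0 cdE ddE p_dd => akin *.
rewrite ler_norml.
by case: (outcomeP o) => ->; rewrite /vec4 /= ?cc0 ?cdE ?ddE; apply/andP; split; lra.
Qed.

Lemma after_dd_not_strictly_firm :
  Pp * (1 - p o_cd) <= p o_dc * (1 - Pp) -> ~ strictly_firm Rp Pp p.
Proof.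
move=> cd_dc; have /andP[_ p_cd_le1] := p01 o_cd; have /andP[p_dc_ge0 _] := p01 o_dc.
have q01 := coop_after_dd_pattern.
have [p_cd_lt1|p_cd_ge1] := ltP (p o_cd) 1.
  apply: (not_strictly_firm_of_limit one01 q01 (after_dd_limit_dist p_cd_lt1)).
    by rewrite dotv_vec4_scaled /S_Y /vec4 /= ler_pdivlMr; lra.
  by rewrite /vec4 /= ltr_pdivrMr; lra.
have p_cd : p o_cd = 1 by lra.
have Hv := limit_dist_point p01 one01 q01 (after_dd_vdist_cd ^~ p_cd).
apply: (not_strictly_firm_of_limit one01 q01 Hv).
  by rewrite dotv_indicator /S_Y /vec4 /= ltW // (lt_trans P_lt_R).
by have -> : (o_dd == o_cd) = false by []; rewrite ltr01.
Qed.

Lemma strictly_firmE : strictly_firm Rp Pp p <->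
  p o_dc * (Rp - Pp) < Pp * (1 - p o_cc) /\ p o_dc * (1 - Pp) < Pp * (1 - p o_cd).
Proof.
split=> [sf | [] ]; last exact: strictly_firm_of_ineqs.
by rewrite !ltNge; split; apply/negP => ?;
  [exact: allc_not_strictly_firm | exact: after_dd_not_strictly_firm].
Qed.

Lemma strictly_firm_press_dyson a b g d :
  (forall o, press_dyson p o =
     a * S_X Rp Pp o + b * S_Y Rp Pp o + g * one4 F o + d * e23 F o) ->
  strictly_firm Rp Pp p <-> a < - d /\ (1 - 2 * Pp) * a < - d.
Proof.
case/(press_dyson_coords p_dd) => p_cc p_cd p_dc; rewrite strictly_firmE.
have -> : (p o_dc * (Rp - Pp) < Pp * (1 - p o_cc)) = (a < - d).
  rewrite -subr_gt0 p_cc p_dc.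
  have -> : Pp * (1 - (1 + (a + b) * (Rp - Pp))) - (a - (a + b) * Pp + d) * (Rp - Pp) =
            - (a + d) * (Rp - Pp) by ring.
  by rewrite pmulr_lgt0 ?subr_gt0 //; apply/idP/idP; lra.
have -> : (p o_dc * (1 - Pp) < Pp * (1 - p o_cd)) = ((1 - 2 * Pp) * a < - d).
  rewrite -subr_gt0 p_cd p_dc.
  have -> : Pp * (1 - (1 + b - (a + b) * Pp + d)) - (a - (a + b) * Pp + d) * (1 - Pp) =
            - ((1 - 2 * Pp) * a + d) by ring.
  by apply/idP/idP; lra.
by [].
Qed.

End StrictlyFirm.
End Play.

Theorem theorem5p3 (F : realType) (Rp Pp : F) (p : outcome -> F) :
  0 < Pp -> Pp < Rp -> Rp < 1 -> 1 < 2 * Rp ->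
  memory_one p -> firm p ->
  (strictly_firm Rp Pp p <->
     (p o_dc < Pp / (Rp - Pp) * (1 - p o_cc) /\
      p o_dc < Pp / (1 - Pp) * (1 - p o_cd))) /\
  (forall alpha beta gamma delta : F,
     (forall o : outcome,
        p o - vec4 1 1 0 0 o =
        alpha * S_X Rp Pp o + beta * S_Y Rp Pp o + gamma * one4 F o + delta * e23 F o) ->
     (strictly_firm Rp Pp p <->
        Num.max alpha ((1 - 2 * Pp) * alpha) < - delta)).
Proof.
move=> P_gt0 P_lt_R R_lt1 _ p01 p_dd; split.
  have divE (x y c : F) : 0 < c -> (x < Pp / c * y) = (x * c < Pp * y).
    by move=> c_gt0; rewrite mulrAC ltr_pdivlMr.
  rewrite !divE ?subr_gt0 ?(lt_trans P_lt_R R_lt1) //.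
  exact: strictly_firmE.
move=> a b g d /(strictly_firm_press_dyson P_gt0 P_lt_R R_lt1 p01 p_dd) ->.
by rewrite gt_max; split=> [[-> ->] | /andP[]].
Qed.
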